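(* Let $1\le b<M$ and let $C$ be the array code over $\mathbb{F}_q$ whose columns are associated with all $b$-dimensional subspaces of $\mathbb{F}_q^M$, each exactly once. Then $C$ has node locality $r_{\mathrm n}=2$, and symbol locality $r_{\mathrm s}=1$ if $b>1$ and $r_{\mathrm s}=2$ if $b=1$.
   Context: $q$ is a prime power. A $[b\times n,M,d]$ array code over $\mathbb{F}_q$ is an $\mathbb{F}_q$-linear space of $b\times n$ matrices of dimension $M$. Given $b$-dimensional subspaces $V_1,\dots,V_n$ of $\mathbb{F}_q^M$, the array code whose columns are associated with them is obtained by placing a basis of $V_j$ as columns $(j-1)b+1,\dots,jb$ (the $j$th thick column) of an $M\times bn$ matrix $G$ and taking all arrays whose column-by-column flattening lies in the row space of $G$. A set $S\subseteq[n]\setminus\{j\}$ is a recovery set for codeword column $j$ if every entry $c_{i,j}$ ($i\in[b]$) is a fixed $\mathbb{F}_q$-linear combination (possibly different for each $i$) of the entries in the columns indexed by $S$, valid for all codewords; equivalently $V_j\subseteq\sum_{k\in S}V_k$. It is a recovery set for symbol $(i,j)$ if $c_{i,j}$ is such a fixed linear combination; equivalently the $i$th column of the $j$th thick column of $G$ lies in $\sum_{k\in S}V_k$. The node locality $r_{\mathrm n}$ (resp. symbol locality $r_{\mathrm s}$) is the smallest $r$ such that every codeword column (resp. every symbol) has a recovery set of size at most $r$. *)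

From HB Require Import structures.
From mathcomp Require Import all_boot all_order all_algebra all_field.
Set Implicit Arguments. Unset Strict Implicit. Unset Printing Implicit Defensive.
Import GRing.Theory.
Local Open Scope ring_scope.

(* An array code of length n over F with b rows and dimension M is given by a
   family G : 'I_n -> 'M[F]_(b, M): the rows of G j are the b generator-matrix
   columns of the j-th thick column (mathcomp uses row vectors, so the M x bn
   generator matrix of the paper is stored transposed, thick column by thick
   column). *)

Definition codeword (F : fieldType) (b M n : nat) (G : 'I_n -> 'M[F]_(b, M))
    (x : 'rV[F]_M) : 'M[F]_(b, n) :=
  \matrix_(i < b, j < n) (x *m (G j)^T) 0 i.

Definition symbol_recovery_set (F : fieldType) (b M n : nat)
    (G : 'I_n -> 'M[F]_(b, M)) (S : {set 'I_n}) (i : 'I_b) (j : 'I_n) : Prop :=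
  j \notin S /\
  exists a : 'I_n -> 'I_b -> F,
    forall x : 'rV[F]_M,
      codeword G x i j = \sum_(k in S) \sum_(i' < b) a k i' * codeword G x i' k.

Definition node_recovery_set (F : fieldType) (b M n : nat)
    (G : 'I_n -> 'M[F]_(b, M)) (S : {set 'I_n}) (j : 'I_n) : Prop :=
  forall i : 'I_b, symbol_recovery_set G S i j.

Definition node_local_within (F : fieldType) (b M n : nat)
    (G : 'I_n -> 'M[F]_(b, M)) (r : nat) : Prop :=
  forall j : 'I_n, exists S : {set 'I_n}, node_recovery_set G S j /\ (#|S| <= r)%N.

Definition symbol_local_within (F : fieldType) (b M n : nat)
    (G : 'I_n -> 'M[F]_(b, M)) (r : nat) : Prop :=
  forall (i : 'I_b) (j : 'I_n),
    exists S : {set 'I_n}, symbol_recovery_set G S i j /\ (#|S| <= r)%N.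

Definition is_node_locality (F : fieldType) (b M n : nat)
    (G : 'I_n -> 'M[F]_(b, M)) (r : nat) : Prop :=
  node_local_within G r /\ forall r', node_local_within G r' -> (r <= r')%N.

Definition is_symbol_locality (F : fieldType) (b M n : nat)
    (G : 'I_n -> 'M[F]_(b, M)) (r : nat) : Prop :=
  symbol_local_within G r /\ forall r', symbol_local_within G r' -> (r <= r')%N.

Definition all_subspaces_code (F : fieldType) (b M n : nat)
    (G : 'I_n -> 'M[F]_(b, M)) : Prop :=
  [/\ forall j, row_free (G j),
      forall j k, (G j == G k)%MS -> j = k
    & forall A : 'M[F]_(b, M), row_free A -> exists j, (G j == A)%MS].

(* Recovery sets are a matter of row spaces: S recovers symbol (i, j) iff the
   i-th basis vector of V_j lies in the sum of the V_k, k in S.  Given V = V_j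
   and a vector w outside V, replacing one basis vector v_m of V by w, or by
   v_m + w, gives two further b-dimensional subspaces U_1, U_2 different from
   V; U_1 alone contains the other b - 1 basis vectors of V, and U_1 + U_2
   contains v_m = (v_m + w) - w as well.  Conversely no column is recovered by
   the empty set, and a single column V_k containing V_j would equal it by
   dimension count, which forces k = j. *)
From HB Require Import structures.
From mathcomp Require Import all_boot all_order all_algebra all_field.
From mathcomp Require Import zify.

Set Implicit Arguments. Unset Strict Implicit. Unset Printing Implicit Defensive.
Import GRing.Theory.
Local Open Scope ring_scope.

Section RecoverySets.
Variables (F : fieldType) (b M n : nat) (G : 'I_n -> 'M[F]_(b, M)).

Lemma codewordE x i j : codeword G x i j = \sum_m x 0 m * G j i m.
Proof. by rewrite /codeword !mxE; apply: eq_bigr => m _; rewrite mxE. Qed.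

Lemma codeword_delta m i j : codeword G (delta_mx 0 m) i j = G j i m.
Proof.
rewrite codewordE (bigD1 m) //= mxE !eqxx mul1r big1 ?addr0 // => m' m'm.
by rewrite mxE eqxx (negbTE m'm) mul0r.
Qed.

Lemma symbol_recovery_setP S i j :
  symbol_recovery_set G S i j <->
  j \notin S /\ (row i (G j) <= \sum_(k in S) <<G k>>)%MS.
Proof.
split=> [[jS [a Ha]] | [jS /sub_sumsmxP[u Hu]]]; split=> //.
  have -> : row i (G j) = \sum_(k in S) (\row_i' a k i') *m G k.
    apply/rowP => m; rewrite mxE summxE.
    rewrite -codeword_delta Ha; apply: eq_bigr => k _; rewrite !mxE.
    by apply: eq_bigr => i' _; rewrite codeword_delta mxE.
  apply: summx_sub => k kS; apply: (sumsmx_sup k) => //.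
  by rewrite genmxE submxMl.
(* coordinates of the k-th summand with respect to the basis G k *)
pose c k := u k *m <<G k>>%MS *m pinvmx (G k).
have cK k : u k *m <<G k>>%MS = c k *m G k.
  by rewrite mulmxKpV // -(genmxE (G k)) submxMl.
exists (fun k i' => c k 0 i') => x.
have Gji m : G j i m = \sum_(k in S) \sum_i' c k 0 i' * G k i' m.
  move/rowP/(_ m): Hu; rewrite mxE summxE => ->.
  by apply: eq_bigr => k _; rewrite cK mxE.
rewrite codewordE.
under eq_bigr => m _ do rewrite Gji mulr_sumr.
rewrite exchange_big; apply: eq_bigr => k _.
under eq_bigr => m _ do rewrite mulr_sumr.
rewrite exchange_big; apply: eq_bigr => i' _.
by rewrite codewordE mulr_sumr; apply: eq_bigr => m _; rewrite mulrCA.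
Qed.

Lemma symbol_recovery_set1 k i j :
  symbol_recovery_set G [set k] i j <-> k != j /\ (row i (G j) <= G k)%MS.
Proof. by rewrite symbol_recovery_setP big_set1 genmxE inE eq_sym. Qed.

Lemma symbol_recovery_set0 i j : row_free (G j) -> ~ symbol_recovery_set G set0 i j.
Proof.
move=> freeGj /symbol_recovery_setP[_]; rewrite big_set0 => /submx0null.
rewrite rowE -(mul0mx _ (G j)) => /(row_free_inj freeGj)/matrixP/(_ 0 i).
by rewrite !mxE !eqxx => /eqP; rewrite oner_eq0.
Qed.

Lemma node_recovery_set1 k j :
  (0 < b)%N -> node_recovery_set G [set k] j <-> k != j /\ (G j <= G k)%MS.
Proof.
move=> b_gt0; split=> [recj | [kj Gjk] i]; last first.
  by apply/symbol_recovery_set1; split; last exact: submx_trans (row_sub i _) Gjk.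
have [kj _] := (symbol_recovery_set1 k (Ordinal b_gt0) j).1 (recj _).
split=> //; apply/row_subP => i.
by have [_] := (symbol_recovery_set1 k i j).1 (recj i).
Qed.

Lemma symbol_recovery_set_gt0 S i j :
  row_free (G j) -> symbol_recovery_set G S i j -> (0 < #|S|)%N.
Proof.
move=> freeGj recS; rewrite card_gt0; apply: contraPneq recS => ->.
exact: symbol_recovery_set0.
Qed.

Lemma symbol_recovery_set_node S i j :
  b = 1%N -> symbol_recovery_set G S i j -> node_recovery_set G S j.
Proof.
move=> b1 recS i'; suff -> : i' = i by [].
by apply: ord_inj; have := ltn_ord i; have := ltn_ord i'; lia.
Qed.

Lemma symbol_local_within_node r : node_local_within G r -> symbol_local_within G r.
Proof. by move=> loc i j; have [S [recS Sr]] := loc j; exists S. Qed.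

End RecoverySets.

Section ReplaceRow.
Variables (F : fieldType) (b M : nat).

Definition replace_row (V : 'M[F]_(b, M)) (m : 'I_b) (v : 'rV[F]_M) : 'M[F]_(b, M) :=
  \matrix_(r, c) (if r == m then v 0 c else V r c).

Lemma row_replace_row V m v r :
  row r (replace_row V m v) = if r == m then v else row r V.
Proof. by apply/rowP => c; rewrite !mxE; case: (r == m); rewrite ?mxE. Qed.

Lemma replace_row_sub V m v r : r != m -> (row r V <= replace_row V m v)%MS.
Proof. by move=> rm; apply: (eq_row_sub r); rewrite row_replace_row (negbTE rm). Qed.

Lemma replaced_row_sub V m v : (v <= replace_row V m v)%MS.
Proof. by apply: (eq_row_sub m); rewrite row_replace_row eqxx. Qed.

Lemma sub_addsmx_replace_row V m v : (V <= replace_row V m v + row m V)%MS.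
Proof.
apply/row_subP => r; have [-> | rm] := eqVneq r m; first exact: addsmxSr.
exact: submx_trans (replace_row_sub V v rm) (addsmxSl _ _).
Qed.

(* U + row m V contains V + w, of rank b + 1, so U itself has rank b. *)
Lemma replace_row_free V m v (w : 'rV[F]_M) :
  row_free V -> ~~ (w <= V)%MS -> (w <= replace_row V m v + row m V)%MS ->
  row_free (replace_row V m v).
Proof.
move=> /eqP freeV wV wU; set U := replace_row V m v.
have rkVw : (\rank V < \rank (V + w))%N.
  suff : (V < V + w)%MS by rewrite ltmxErank => /andP[].
  rewrite ltmxE addsmxSl /=; apply: contra wV.
  exact: submx_trans (addsmxSr _ _).
have rkVwU : (\rank (V + w) <= \rank (U + row m V))%N.
  by apply/mxrankS; rewrite addsmx_sub sub_addsmx_replace_row.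
have rkUV := (mxrank_adds_leqif U (row m V)).1.
have rk_row := rank_leq_row (row m V).
have rkU := rank_leq_row U.
by apply/eqP; lia.
Qed.

Lemma exists_nsubmx (V : 'M[F]_(b, M)) : (b < M)%N -> exists w : 'rV[F]_M, ~~ (w <= V)%MS.
Proof.
move=> bM; have : ~~ ((1%:M : 'M[F]_M) <= V)%MS.
  apply: contraL bM => /mxrankS; rewrite mxrank1 -leqNgt.
  by move/leq_trans; apply; apply: rank_leq_row.
by case/row_subPn => i Hi; exists (row i 1%:M).
Qed.

End ReplaceRow.

Section AllSubspacesCode.
Variables (F : fieldType) (b M n : nat) (G : 'I_n -> 'M[F]_(b, M)).
Hypothesis code : all_subspaces_code G.

Lemma all_subspaces_code_n_gt0 : (b <= M)%N -> (0 < n)%N.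
Proof.
move=> bM; have [_ _ onto] := code.
have [|[j lt_j_n] _] := onto (pid_mx b); last exact: leq_ltn_trans (leq0n j) lt_j_n.
by rewrite /row_free rank_pid_mx.
Qed.

Lemma all_subspaces_code_replace_row j m v (w : 'rV[F]_M) :
  ~~ (w <= G j)%MS -> (w <= replace_row (G j) m v + row m (G j))%MS ->
  exists2 k, k != j & (replace_row (G j) m v <= G k)%MS.
Proof.
have [free _ onto] := code => wGj wU.
have [k /andP[_ UGk]] := onto _ (replace_row_free (free j) wGj wU).
exists k => //; apply: contraNneq wGj => kj; rewrite kj in UGk.
by apply: submx_trans wU _; rewrite addsmx_sub UGk row_sub.
Qed.

Lemma all_subspaces_code_sub k j : (G j <= G k)%MS -> k = j.
Proof.
have [free inj _] := code => Gjk; apply/esym/inj.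
have [_ <-] := mxrank_leqif_eq Gjk.
by rewrite (eqP (free j)) (eqP (free k)).
Qed.

Lemma all_subspaces_code_node_recovery_card S j :
  (0 < b)%N -> node_recovery_set G S j -> (1 < #|S|)%N.
Proof.
move=> b_gt0 recS; have [free _ _] := code.
rewrite ltnNge; apply/negP => S_le1.
have [S0 | [k kS]] := set_0Vmem S.
  by apply: (symbol_recovery_set0 (free j)); rewrite -S0; apply: (recS (Ordinal b_gt0)).
have Sk : S = [set k] by apply/eqP; rewrite eq_sym eqEcard sub1set kS cards1.
rewrite Sk in recS; have [kj Gjk] := (node_recovery_set1 G k j b_gt0).1 recS.
by move: kj; rewrite (all_subspaces_code_sub Gjk) eqxx.
Qed.

Lemma all_subspaces_code_node_local2 : (0 < b)%N -> (b < M)%N -> node_local_within G 2.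
Proof.
move=> b_gt0 bM j; have [w wGj] := exists_nsubmx (G j) bM.
pose m := Ordinal b_gt0; set v := row m (G j).
have wU1 : (w <= replace_row (G j) m w + v)%MS.
  exact: submx_trans (replaced_row_sub _ _ _) (addsmxSl _ _).
have wU2 : (w <= replace_row (G j) m (v + w) + v)%MS.
  rewrite -{1}(addKr v w) addmx_sub ?eqmx_opp ?addsmxSr //.
  exact: submx_trans (replaced_row_sub _ _ _) (addsmxSl _ _).
have [k1 k1j U1k1] := all_subspaces_code_replace_row wGj wU1.
have [k2 k2j U2k2] := all_subspaces_code_replace_row wGj wU2.
exists [set k1; k2]; split; last by rewrite cards2; case: (_ != _).
move=> i; apply/symbol_recovery_setP; split.
  by rewrite !inE negb_or ![j == _]eq_sym k1j k2j.
have Gk_sub k : k \in [set k1; k2] -> (G k <= \sum_(k in [set k1; k2]) <<G k>>)%MS.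
  by move=> kS; apply: (sumsmx_sup k); rewrite ?genmxE.
have Gk1 := Gk_sub k1 (set21 _ _); have Gk2 := Gk_sub k2 (set22 _ _).
have [-> | im] := eqVneq i m.
  rewrite -/v -(addrK w v); apply: addmx_sub; last rewrite eqmx_opp.
    exact: submx_trans (replaced_row_sub _ _ _) (submx_trans U2k2 Gk2).
  exact: submx_trans (replaced_row_sub _ _ _) (submx_trans U1k1 Gk1).
exact: submx_trans (replace_row_sub _ w im) (submx_trans U1k1 Gk1).
Qed.

Lemma all_subspaces_code_symbol_local1 : (1 < b)%N -> (b < M)%N -> symbol_local_within G 1.
Proof.
move=> b_gt1 bM i j; have [w wGj] := exists_nsubmx (G j) bM.
have [m] : exists m, m \in [set~ i].
  by apply/set0Pn; rewrite -card_gt0 cardsC1 card_ord -ltnS prednK // ltnW.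
rewrite !inE eq_sym => im.
have wU : (w <= replace_row (G j) m w + row m (G j))%MS.
  exact: submx_trans (replaced_row_sub _ _ _) (addsmxSl _ _).
have [k kj Uk] := all_subspaces_code_replace_row wGj wU.
exists [set k]; rewrite cards1; split=> //; apply/symbol_recovery_set1; split=> //.
exact: submx_trans (replace_row_sub _ w im) Uk.
Qed.

Lemma all_subspaces_code_node_locality : (0 < b)%N -> (b < M)%N -> is_node_locality G 2.
Proof.
move=> b_gt0 bM; split; first exact: all_subspaces_code_node_local2.
move=> r loc; pose j := Ordinal (all_subspaces_code_n_gt0 (ltnW bM)).
have [S [recS Sr]] := loc j.
exact: leq_trans (all_subspaces_code_node_recovery_card b_gt0 recS) Sr.
Qed.

Lemma all_subspaces_code_symbol_locality1 : (1 < b)%N -> (b < M)%N -> is_symbol_locality G 1.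
Proof.
move=> b_gt1 bM; split; first exact: all_subspaces_code_symbol_local1.
move=> r loc; have [free _ _] := code.
pose j := Ordinal (all_subspaces_code_n_gt0 (ltnW bM)).
have [S [recS Sr]] := loc (Ordinal (ltnW b_gt1)) j.
exact: leq_trans (symbol_recovery_set_gt0 (free j) recS) Sr.
Qed.

Lemma all_subspaces_code_symbol_locality2 : b = 1%N -> (b < M)%N -> is_symbol_locality G 2.
Proof.
move=> b1 bM; have b_gt0 : (0 < b)%N by rewrite b1.
split; first exact/symbol_local_within_node/all_subspaces_code_node_local2.
move=> r loc; pose j := Ordinal (all_subspaces_code_n_gt0 (ltnW bM)).
have [S [recS Sr]] := loc (Ordinal b_gt0) j.
have recjS := symbol_recovery_set_node b1 recS.
exact: leq_trans (all_subspaces_code_node_recovery_card b_gt0 recjS) Sr.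
Qed.

End AllSubspacesCode.

Theorem mainTheorem4 (F : finFieldType) (b M n : nat) (G : 'I_n -> 'M[F]_(b, M)) :
  (1 <= b)%N -> (b < M)%N -> all_subspaces_code G ->
  is_node_locality G 2 /\ is_symbol_locality G (if (1 < b)%N then 1 else 2).
Proof.
move=> b_gt0 bM code; split; first exact: all_subspaces_code_node_locality.
case: ifPn => [b_gt1 | b_le1]; first exact: all_subspaces_code_symbol_locality1.
apply: all_subspaces_code_symbol_locality2 => //.
by apply/eqP; rewrite eqn_leq b_gt0 leqNgt b_le1.
Qed.
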